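(* In the subgroup setting described in the context: (1) for all integers $k,l\geq 0$, $R(k,l)\subseteq B_G(1_G,k+l)$; (2) for every integer $k\geq 0$, $B_G(1_G,k)\subseteq R(k,\Lambda(k))$, where $\Lambda(k)=\max_{g\in B_G(1_G,k)}\|g\|_H$.
   Context: $G$ is a finitely generated group and $H$ a finitely generated subgroup. $E_H$ is a finite generating set of $H$ closed under inverses and $D\supseteq E_H$ a finite generating set of $G$ closed under inverses; $d_H$, $d_G$ are the corresponding word metrics, $B_G(1_G,k)$ the closed ball of radius $k$ in $d_G$, $\|g\|_G=d_G(1_G,g)$. $F\subseteq G$ contains exactly one element of each left coset $gH$, chosen as an element of minimal $\|\cdot\|_G$ in that coset (with $1_G$ chosen for $H$); so every $g$ is uniquely $g=fh$, $f\in F$, $h\in H$, and $\|g\|_G\geq\|f\|_G$ for all $g\in fH$. Define $\pi(g)=f^{-1}g\in H$ for $g\in fH$, $\|g\|_H=d_H(1_G,\pi(g))$, and $\omega(g)=d_G(1_G,gH)=\|f\|_G$ for $g\in fH$. The rectangle of height $k$ and length $l$ is $R(k,l)=\{g\in G:\omega(g)\leq k,\ \|g\|_H\leq l\}$. *)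

From Stdlib Require Import List Arith Lia ClassicalEpsilon.
Import ListNotations.
Set Implicit Arguments.

Record Group := {
  gcar :> Type;
  gmul : gcar -> gcar -> gcar;
  ginv : gcar -> gcar;
  gone : gcar;
  gmulA : forall x y z, gmul x (gmul y z) = gmul (gmul x y) z;
  gmul1 : forall x, gmul gone x = x;
  gmulV : forall x, gmul (ginv x) x = gone
}.

Section Defs.
Context {G : Group}.

Definition wprod (w : list G) : G := fold_right (gmul G) (gone G) w.

Definition wordlen (S : list G) (g : G) (n : nat) : Prop :=
  exists w : list G, Forall (fun x => In x S) w /\ length w = n /\ wprod w = g.

(* word norm ||g||_S = d_S(1,g): least length of a word over S representing g
   (chosen by classical description; meaningful when S generates g) *)
Definition wnorm (S : list G) (g : G) : nat :=
  epsilon (inhabits 0)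
    (fun n => wordlen S g n /\ forall m, wordlen S g m -> n <= m).

Definition ball (S : list G) (k : nat) (g : G) : Prop := wnorm S g <= k.

Definition is_subgroup (H : G -> Prop) : Prop :=
  H (gone G) /\ (forall x y, H x -> H y -> H (gmul G x y)) /\
  (forall x, H x -> H (ginv G x)).

(* S generates the subgroup H (as a monoid; S is also inverse-closed) *)
Definition generates (S : list G) (H : G -> Prop) : Prop :=
  (forall x, In x S -> H x) /\
  (forall h, H h -> exists w, Forall (fun x => In x S) w /\ wprod w = h).

Definition inv_closed (S : list G) : Prop :=
  forall x, In x S -> In (ginv G x) S.

Variables (H : G -> Prop) (D EH : list G) (F : G -> Prop).

Definition rep (g : G) : G :=
  epsilon (inhabits (gone G)) (fun f => F f /\ H (gmul G (ginv G f) g)).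

Definition proj (g : G) : G := gmul G (ginv G (rep g)) g.

Definition normH (g : G) : nat := wnorm EH (proj g).

(* omega(g) = d_G(1, gH) = ||f||_G *)
Definition omega (g : G) : nat := wnorm D (rep g).

Definition rect (k l : nat) (g : G) : Prop := omega g <= k /\ normH g <= l.

Definition Lambda (k : nat) : nat :=
  epsilon (inhabits 0)
    (fun L => (exists g, ball D k g /\ normH g = L) /\
              (forall g, ball D k g -> normH g <= L)).

End Defs.

(* Every g factors as g = f * pi(g) with f the representative of gH.
   Concatenating a D-geodesic for f with an E_H-geodesic for pi(g), which is
   also a word over D, gives (1).  For (2), minimality of f in its coset gives
   omega(g) <= ||g||_G, and Lambda(k) is a genuine maximum because the ball
   B_G(1,k) is finite: it is covered by the products of at most k letters of D. *)
From Stdlib Require Import List Arith Lia Wf_nat Classical ClassicalEpsilon.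
Import ListNotations.

Lemma exists_least (P : nat -> Prop) :
  (exists n, P n) -> exists n, P n /\ forall m, P m -> n <= m.
Proof.
  intro inhP.
  destruct (dec_inh_nat_subset_has_unique_least_element P (fun n => classic (P n)) inhP)
    as [n [leastn _]].
  now exists n.
Qed.

Lemma exists_greatest (Q : nat -> Prop) (B : nat) :
  (forall n, Q n -> n <= B) -> (exists n, Q n) -> exists L, Q L /\ forall n, Q n -> n <= L.
Proof.
  induction B as [|B IH]; intros boundQ inhQ.
  - destruct inhQ as [n Qn]; exists n; split; [exact Qn|].
    intros m Qm; specialize (boundQ m Qm); lia.
  - destruct (classic (Q (S B))) as [QSB|nQSB].
    + now exists (S B).
    + apply IH; [|exact inhQ].
      intros m Qm; specialize (boundQ m Qm).
      destruct (Nat.eq_dec m (S B)) as [->|]; [contradiction|lia].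
Qed.

Lemma le_list_max (l : list nat) (x : nat) : In x l -> x <= list_max l.
Proof. intro inx. exact (proj1 (Forall_forall _ l) (proj1 (list_max_le l _) (le_n _)) x inx). Qed.

Section Words.
Context {G : Group}.
Implicit Types (S T : list G) (g : G).

Lemma gmulV_r g : gmul G g (ginv G g) = gone G.
Proof.
  rewrite <- (gmul1 G (gmul G g (ginv G g))), <- (gmulV G (ginv G g)) at 1.
  rewrite <- gmulA, (gmulA G (ginv G g) g (ginv G g)), gmulV, gmul1.
  apply gmulV.
Qed.

Lemma gmulKV (f g : G) : gmul G f (gmul G (ginv G f) g) = g.
Proof. now rewrite gmulA, gmulV_r, gmul1. Qed.

Lemma wprod_app (w1 w2 : list G) : wprod (w1 ++ w2) = gmul G (wprod w1) (wprod w2).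
Proof.
  induction w1 as [|x w1 IH]; simpl.
  - now rewrite gmul1.
  - unfold wprod in *; simpl. now rewrite IH, gmulA.
Qed.

Lemma wordlen_mul S (a b : G) (m n : nat) :
  wordlen S a m -> wordlen S b n -> wordlen S (gmul G a b) (m + n).
Proof.
  intros [u [overu [<- <-]]] [v [overv [<- <-]]].
  exists (u ++ v); split; [apply Forall_app; now split|].
  now rewrite length_app, wprod_app.
Qed.

Lemma wordlen_incl {S T g n} : incl S T -> wordlen S g n -> wordlen T g n.
Proof.
  intros ST [w [overw lenw]]. exists w; split; [|exact lenw].
  eapply Forall_impl; [|exact overw]. exact ST.
Qed.

Lemma generates_wordlen {S} {P : G -> Prop} {g} :
  generates S P -> P g -> exists n, wordlen S g n.
Proof.
  intros [_ genS] Pg. destruct (genS g Pg) as [w [overw <-]].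
  now exists (length w), w.
Qed.

Lemma wnorm_spec {S g} : (exists n, wordlen S g n) ->
  wordlen S g (wnorm S g) /\ forall m, wordlen S g m -> wnorm S g <= m.
Proof. intro inh. unfold wnorm. apply epsilon_spec, exists_least, inh. Qed.

Lemma wordlen_wnorm {S g} : (exists n, wordlen S g n) -> wordlen S g (wnorm S g).
Proof. intro inh. exact (proj1 (wnorm_spec inh)). Qed.

Lemma wnorm_le {S g n} : wordlen S g n -> wnorm S g <= n.
Proof. intro lgn. exact (proj2 (wnorm_spec (ex_intro _ n lgn)) n lgn). Qed.

Fixpoint products S (k : nat) : list G :=
  match k with
  | 0 => [gone G]
  | S k => gone G :: flat_map (fun x => map (gmul G x) (products S k)) S
  end.

Lemma In_products S (k : nat) (w : list G) :
  Forall (fun x => In x S) w -> length w <= k -> In (wprod w) (products S k).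
Proof.
  revert w; induction k as [|k IH]; intros [|x w] overw lenw; simpl in lenw |- *;
    try (left; reflexivity); try lia.
  inversion overw as [|? ? inx overw']; subst.
  right; apply in_flat_map; exists x; split; [exact inx|].
  apply in_map, IH; [exact overw'|lia].
Qed.

Lemma ball_products S (k : nat) g :
  (exists n, wordlen S g n) -> ball S k g -> In g (products S k).
Proof.
  intros inh bg. destruct (wordlen_wnorm inh) as [w [overw [lenw <-]]].
  apply In_products; [exact overw|unfold ball in bg; lia].
Qed.

Lemma exists_max_on_ball S (k : nat) (phi : G -> nat) :
  generates S (fun _ => True) ->
  exists L, (exists g, ball S k g /\ phi g = L) /\ (forall g, ball S k g -> phi g <= L).
Proof.
  intro genS.
  pose (Q n := exists g, ball S k g /\ phi g = n).
  assert (boundQ : forall n, Q n -> n <= list_max (map phi (products S k))).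
  { intros n [g [bg <-]]. apply le_list_max, in_map, ball_products; [|exact bg].
    now apply (generates_wordlen genS). }
  assert (ball1 : ball S k (gone G)).
  { unfold ball. enough (wnorm S (gone G) <= 0) by lia.
    apply wnorm_le. now exists []. }
  destruct (exists_greatest Q _ boundQ (ex_intro _ _ (ex_intro _ _ (conj ball1 eq_refl))))
    as [L [QL maxL]].
  exists L; split; [exact QL|].
  intros g bg. apply maxL. now exists g.
Qed.

End Words.

Section Rectangles.
Context {G : Group}.
Variables (H : G -> Prop) (EH D : list G) (F : G -> Prop).
Hypotheses (genEH : generates EH H) (genD : generates D (fun _ => True))
  (EH_D : incl EH D).
Hypothesis F_rep : forall g : G, exists f, F f /\ H (gmul G (ginv G f) g).
Hypothesis F_min : forall f h : G, F f -> H h -> wnorm D f <= wnorm D (gmul G f h).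

Lemma rep_spec (g : G) : F (rep H F g) /\ H (proj H F g).
Proof. unfold proj, rep. apply epsilon_spec, F_rep. Qed.

Lemma rep_proj (g : G) : gmul G (rep H F g) (proj H F g) = g.
Proof. apply gmulKV. Qed.

Lemma wnorm_le_omega_normH (g : G) : wnorm D g <= omega H D F g + normH H EH F g.
Proof.
  rewrite <- (rep_proj g) at 1.
  apply wnorm_le, wordlen_mul.
  - apply wordlen_wnorm. now apply (generates_wordlen genD).
  - apply (wordlen_incl EH_D), wordlen_wnorm.
    apply (generates_wordlen genEH), rep_spec.
Qed.

Lemma omega_le_wnorm (g : G) : omega H D F g <= wnorm D g.
Proof.
  unfold omega. rewrite <- (rep_proj g) at 2.
  apply F_min; apply rep_spec.
Qed.

Lemma normH_le_Lambda (k : nat) (g : G) : ball D k g -> normH H EH F g <= Lambda H D EH F k.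
Proof.
  apply (proj2 (epsilon_spec _ _ (exists_max_on_ball D k (normH H EH F) genD))).
Qed.

End Rectangles.

Theorem proposition4 (G : Group) (H : G -> Prop) (EH D : list G) (F : G -> Prop)
  (HH : is_subgroup H)
  (HEH : generates EH H) (HEHinv : inv_closed EH)
  (HD : generates D (fun _ => True)) (HDinv : inv_closed D)
  (HEHD : incl EH D)
  (HFex : forall g : G, exists f, F f /\ H (gmul G (ginv G f) g))
  (HFuniq : forall f1 f2 : G, F f1 -> F f2 -> H (gmul G (ginv G f1) f2) -> f1 = f2)
  (HFmin : forall f h : G, F f -> H h -> wnorm D f <= wnorm D (gmul G f h))
  (HF1 : F (gone G)) :
  (forall (k l : nat) (g : G), rect H D EH F k l g -> ball D (k + l) g) /\
  (forall (k : nat) (g : G), ball D k g -> rect H D EH F k (Lambda H D EH F k) g).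
Proof.
  split.
  - intros k l g [omega_g normH_g]. unfold ball.
    pose proof (wnorm_le_omega_normH H EH D F HEH HD HEHD HFex g). lia.
  - intros k g bg. split.
    + pose proof (omega_le_wnorm H D F HFex HFmin g). unfold ball in bg. lia.
    + exact (normH_le_Lambda H EH D F HD k g bg).
Qed.
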